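(* For every initial condition $z(0,0)\in\Lambda$ there exists a complete solution $z=(x,\sigma)$ of the hybrid system $\mathcal H=(C,f,D,g)$.
   Context: Network model. $(N,E)$ is a connected directed graph with $N=\{1,\dots,|N|\}$, $E\subseteq N\times N$, with arbitrary orientation: if $(i,j)\in E$ then $(j,i)\notin E$. For $j\in N$, ''$i:i\to j$'' ranges over $i$ with $(i,j)\in E$ and ''$k:j\to k$'' over $k$ with $(j,k)\in E$. Constants: $M_j>0$, $p^L_j\in\mathbb{R}$ ($j\in N$), $B_{ij}>0$ ($(i,j)\in E$). Continuous state $x=(\eta,\omega,x^s)\in\mathbb{R}^n$ with $\eta_{ij}\in\mathbb{R}$ ($(i,j)\in E$), $\omega_j\in\mathbb{R}$, $x^s_j\in\mathbb{R}^{n_j}$ ($j\in N$), $n=|E|+|N|+\sum_jn_j$; $p_{ij}=B_{ij}\sin\eta_{ij}$, $s_j=g_j(x^s_j,-\omega_j)$, where $f_j:\mathbb{R}^{n_j}\times\mathbb{R}\to\mathbb{R}^{n_j}$, $g_j:\mathbb{R}^{n_j}\times\mathbb{R}\to\mathbb{R}$ are globally Lipschitz. Hysteretic loads as a hybrid system. For each $j$ constants $\overline d_j\ge0$ and thresholds $\omega^1_j>\omega^0_j>0$ are given. ${\rm sgn}(a)=1$ if $a\ge0$ and $-1$ otherwise. The discrete state is $\sigma\in P^{|N|}$, $P=\{-1,0,1\}$, and $z=(x,\sigma)$. Let $\mathcal I_j(\omega_j)=\{{\rm sgn}(\omega_j)\}$ if $|\omega_j|>\omega^1_j$, $\{0\}$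 if $|\omega_j|<\omega^0_j$, $\{0,{\rm sgn}(\omega_j)\}$ if $\omega^0_j\le|\omega_j|\le\omega^1_j$; $\Lambda=C=\{z\in\mathbb{R}^n\times P^{|N|}:\sigma_j\in\mathcal I_j(\omega_j)\ \forall j\}$. Flow map $f$ on $C$: $\dot\eta_{ij}=\omega_i-\omega_j$; $M_j\dot\omega_j=-p^L_j+s_j-\overline d_j\sigma_j-\sum_{k:j\to k}p_{jk}+\sum_{i:i\to j}p_{ij}$; $\dot x^s_j=f_j(x^s_j,-\omega_j)$; $\dot\sigma_j=0$. Jump set $D$: the set of $z\in\Lambda$ such that for some $j$, either ($|\omega_j|=\omega^1_j$ and $\sigma_j=0$) or ($|\omega_j|=\omega^0_j$ and $\sigma_j={\rm sgn}(\omega_j)$). Jump map $g$ on $D$: $x^+=x$; $\sigma_j^+={\rm sgn}(\omega_j)$ if $|\omega_j|=\omega^1_j$ and $\sigma_j=0$, $\sigma_j^+=0$ if $|\omega_j|=\omega^0_j$ and $\sigma_j={\rm sgn}(\omega_j)$, $\sigma_j^+=\sigma_j$ otherwise (so $g(D)\subseteq C$). Hybrid solutions. A hybrid time domain is a subset $K\subseteq\mathbb{R}_{\ge0}\times\mathbb{N}_0$ that is a union of a finite or infinite sequence of sets $[t_\ell,t_{\ell+1}]\times\{\ell\}$ ($0=t_0\le t_1\le\dots$), the last one (if any) possibly of the form $[t_\ell,t_{\ell+1})\times\{\ell\}$ or $[t_\ell,\infty)\times\{\ell\}$. A solution of $\mathcal H$ is a map $z:K\to\mathbb{R}^n\times P^{|N|}$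 on a hybrid time domain with $z(0,0)\in C\cup D$, such that for each $\ell$, $t\mapsto z(t,\ell)$ is locally absolutely continuous on $T_\ell=\{t:(t,\ell)\in K\}$, and if $T_\ell$ has nonempty interior then $z(t,\ell)\in C$ for all $t$ in the interior and $\dot z(t,\ell)=f(z(t,\ell))$ for almost all $t\in T_\ell$; and whenever $(t,\ell),(t,\ell+1)\in K$, $z(t,\ell)\in D$ and $z(t,\ell+1)=g(z(t,\ell))$. A solution is complete if $K$ is unbounded. *)

From Stdlib Require Import Reals Lra Lia ZArith Relations.
Open Scope R_scope.

Fixpoint rsum (m : nat) (F : nat -> R) : R :=
  match m with O => 0 | S m' => rsum m' F + F m' end.

(* ---------- network data (nodes are 0..nN-1, i.e. node j+1 of the paper is j) ---------- *)
Record Net := mkNet {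
  nN   : nat;
  Enet : nat -> nat -> bool;
  Mc   : nat -> R;
  pL   : nat -> R;
  Bc   : nat -> nat -> R;
  dbar : nat -> R;
  w0   : nat -> R;
  w1   : nat -> R;
  ns   : nat -> nat;
  fj   : nat -> (nat -> R) -> R -> (nat -> R);  (* f_j : R^{n_j} x R -> R^{n_j} (first n_j coords) *)
  gj   : nat -> (nat -> R) -> R -> R
}.

(* Global Lipschitz continuity of F : R^m x R -> R^p, coordinates of vectors
   being the first m (resp. p) entries, with the l^1 norm. *)
Definition LipschitzVec (m p : nat) (F : (nat -> R) -> R -> (nat -> R)) : Prop :=
  exists L : R, forall (a b : nat -> R) (u v : R) (k : nat), (k < p)%nat ->
    Rabs (F a u k - F b v k) <= L * (rsum m (fun i => Rabs (a i - b i)) + Rabs (u - v)).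

Definition LipschitzScal (m : nat) (G : (nat -> R) -> R -> R) : Prop :=
  exists L : R, forall (a b : nat -> R) (u v : R),
    Rabs (G a u - G b v) <= L * (rsum m (fun i => Rabs (a i - b i)) + Rabs (u - v)).

Definition NetAssumptions (P : Net) : Prop :=
  (forall i j, Enet P i j = true -> (i < nN P)%nat /\ (j < nN P)%nat) /\
  (* arbitrary orientation *)
  (forall i j, Enet P i j = true -> Enet P j i = false) /\
  (forall i j, (i < nN P)%nat -> (j < nN P)%nat ->
     clos_refl_trans nat (fun a b => Enet P a b = true \/ Enet P b a = true) i j) /\
  (forall j, (j < nN P)%nat -> 0 < Mc P j) /\
  (forall i j, Enet P i j = true -> 0 < Bc P i j) /\
  (forall j, (j < nN P)%nat -> 0 <= dbar P j) /\
  (forall j, (j < nN P)%nat -> 0 < w0 P j /\ w0 P j < w1 P j) /\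
  (forall j, (j < nN P)%nat -> LipschitzVec (ns P j) (ns P j) (fj P j)) /\
  (forall j, (j < nN P)%nat -> LipschitzScal (ns P j) (gj P j)).

Record HState := mkHState {
  eta : nat -> nat -> R;   (* eta_ij, meaningful for (i,j) in E *)
  om  : nat -> R;
  xs  : nat -> nat -> R;   (* xs j k = k-th coordinate of x^s_j, k < n_j *)
  sg  : nat -> Z           (* sigma_j in P = {-1,0,1} *)
}.

Definition sgn (a : R) : Z := if Rle_dec 0 a then 1%Z else (-1)%Z.

Definition InI (lo hi w : R) (s : Z) : Prop :=
  (hi < Rabs w -> s = sgn w) /\
  (Rabs w < lo -> s = 0%Z) /\
  (lo <= Rabs w <= hi -> s = 0%Z \/ s = sgn w).

Definition InLambda (P : Net) (z : HState) : Prop :=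
  forall j, (j < nN P)%nat -> InI (w0 P j) (w1 P j) (om z j) (sg z j).

Definition InC (P : Net) (z : HState) : Prop := InLambda P z.

Definition InD (P : Net) (z : HState) : Prop :=
  InLambda P z /\
  exists j, (j < nN P)%nat /\
    ((Rabs (om z j) = w1 P j /\ sg z j = 0%Z) \/
     (Rabs (om z j) = w0 P j /\ sg z j = sgn (om z j))).

Definition gsig (lo hi w : R) (s : Z) : Z :=
  match Req_EM_T (Rabs w) hi, Z.eq_dec s 0 with
  | left _, left _ => sgn w
  | _, _ =>
    match Req_EM_T (Rabs w) lo, Z.eq_dec s (sgn w) with
    | left _, left _ => 0%Z
    | _, _ => s
    end
  end.

Definition gmap (P : Net) (z : HState) : HState :=
  mkHState (eta z) (om z) (xs z)
    (fun j => if Nat.ltb j (nN P) then gsig (w0 P j) (w1 P j) (om z j) (sg z j) else sg z j).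

Definition pflow (P : Net) (z : HState) (i j : nat) : R := Bc P i j * sin (eta z i j).
Definition sflow (P : Net) (z : HState) (j : nat) : R := gj P j (xs z j) (- om z j).

Definition omega_rhs (P : Net) (z : HState) (j : nat) : R :=
  - pL P j + sflow P z j - dbar P j * IZR (sg z j)
  - rsum (nN P) (fun k => if Enet P j k then pflow P z j k else 0)
  + rsum (nN P) (fun i => if Enet P i j then pflow P z i j else 0).

Definition HasFlowDeriv (P : Net) (zt : R -> HState) (t : R) : Prop :=
  (forall i j, Enet P i j = true ->
     derivable_pt_lim (fun s => eta (zt s) i j) t (om (zt t) i - om (zt t) j)) /\
  (forall j, (j < nN P)%nat ->
     exists l, derivable_pt_lim (fun s => om (zt s) j) t l /\
               Mc P j * l = omega_rhs P (zt t) j) /\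
  (forall j k, (j < nN P)%nat -> (k < ns P j)%nat ->
     derivable_pt_lim (fun s => xs (zt s) j k) t (fj P j (xs (zt t) j) (- om (zt t) j) k)) /\
  (forall j, (j < nN P)%nat ->
     derivable_pt_lim (fun s => IZR (sg (zt s) j)) t 0).

Definition NullSet (A : R -> Prop) : Prop :=
  forall eps, 0 < eps -> exists lo hi : nat -> R,
    (forall n, lo n <= hi n) /\
    (forall t, A t -> exists n, lo n < t < hi n) /\
    (forall m, rsum m (fun n => hi n - lo n) <= eps).

Definition AbsContOn (a b : R) (u : R -> R) : Prop :=
  forall eps, 0 < eps -> exists delta, 0 < delta /\
    forall (m : nat) (lo hi : nat -> R),
      (forall k, (k < m)%nat -> a <= lo k /\ lo k <= hi k /\ hi k <= b) ->
      (forall k, (S k < m)%nat -> hi k <= lo (S k)) ->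
      rsum m (fun k => hi k - lo k) < delta ->
      rsum m (fun k => Rabs (u (hi k) - u (lo k))) < eps.

Definition LocAbsCont (T : R -> Prop) (u : R -> R) : Prop :=
  forall a b, a <= b -> (forall s, a <= s <= b -> T s) -> AbsContOn a b u.

Definition LocAbsContState (P : Net) (T : R -> Prop) (zt : R -> HState) : Prop :=
  (forall i j, Enet P i j = true -> LocAbsCont T (fun s => eta (zt s) i j)) /\
  (forall j, (j < nN P)%nat -> LocAbsCont T (fun s => om (zt s) j)) /\
  (forall j k, (j < nN P)%nat -> (k < ns P j)%nat -> LocAbsCont T (fun s => xs (zt s) j k)) /\
  (forall j, (j < nN P)%nat -> LocAbsCont T (fun s => IZR (sg (zt s) j))).

Definition Interior (T : R -> Prop) (t : R) : Prop :=
  exists e, 0 < e /\ forall s, Rabs (s - t) < e -> T s.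

(* K s l  means (s,l) in K *)
Definition HybridTimeDomain (K : R -> nat -> Prop) : Prop :=
  exists tt : nat -> R,
    tt O = 0 /\ (forall l, tt l <= tt (S l)) /\
    ( (forall s l, K s l <-> tt l <= s <= tt (S l))
    \/ exists J : nat,
         (forall s l, (l < J)%nat -> (K s l <-> tt l <= s <= tt (S l))) /\
         (forall s l, (J < l)%nat -> ~ K s l) /\
         ( (forall s, K s J <-> tt J <= s <= tt (S J))
         \/ (forall s, K s J <-> tt J <= s < tt (S J))
         \/ (forall s, K s J <-> tt J <= s) ) ).

Definition IsSolution (P : Net) (K : R -> nat -> Prop) (z : R -> nat -> HState) : Prop :=
  HybridTimeDomain K /\
  K 0 O /\ (InC P (z 0 O) \/ InD P (z 0 O)) /\
  (forall l : nat,
     LocAbsContState P (fun t => K t l) (fun t => z t l) /\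
     (forall t, Interior (fun s => K s l) t -> InC P (z t l)) /\
     (exists Nz, NullSet Nz /\
        forall t, K t l -> ~ Nz t ->
          Interior (fun s => K s l) t /\ HasFlowDeriv P (fun s => z s l) t)) /\
  (forall t l, K t l -> K t (S l) -> InD P (z t l) /\ z t (S l) = gmap P (z t l)).

Definition Complete (K : R -> nat -> Prop) : Prop :=
  forall Mb : R, exists s l, K s l /\ Mb <= s + INR l.

From Coquelicot Require Import Coquelicot.
From Stdlib Require Import Reals Lra Lia ZArith List ClassicalEpsilon Classical FunctionalExtensionality.
Open Scope R_scope.

(* Between jumps the relay states sigma are frozen and x follows an ODE whose right-hand side is
   globally Lipschitz (sin, the f_j and the g_j are), so Picard iteration yields a solution on all
   of [0, +oo). The hysteresis margin, the least distance over the nodes from omega_j to the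
   threshold at which sigma_j has to switch, is Lipschitz along this flow, nonnegative exactly on
   Lambda and zero only on D. Flowing until the margin first vanishes, jumping by g (which
   preserves Lambda) and repeating gives a solution. It is complete: either the jumps never stop,
   so that t + l is unbounded, or the last flow never reaches the jump set and runs forever. *)

Fixpoint norm1 {I : Type} (l : list I) (v : I -> R) : R :=
  match l with nil => 0 | cons i l' => Rabs (v i) + norm1 l' v end.

Lemma norm1_ge0 {I} (l : list I) v : 0 <= norm1 l v.
Proof. induction l; simpl; [lra|]. pose proof (Rabs_pos (v a)); lra. Qed.

Lemma norm1_coord {I} (l : list I) v i : In i l -> Rabs (v i) <= norm1 l v.
Proof.
 induction l as [|a l IH]; simpl; [tauto|]. intros [->|Hi].
 - pose proof (norm1_ge0 l v); lra.
 - pose proof (Rabs_pos (v a)); specialize (IH Hi); lra.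
Qed.

Lemma norm1_ext {I} (l : list I) v w : (forall i, v i = w i) -> norm1 l v = norm1 l w.
Proof. intros H; induction l; simpl; [auto|]. rewrite H, IHl; auto. Qed.

Lemma norm1_triangle {I} (l : list I) a b c :
  norm1 l (fun i => a i - c i) <= norm1 l (fun i => a i - b i) + norm1 l (fun i => b i - c i).
Proof.
 induction l as [|i l IH]; simpl; [lra|].
 pose proof (Rabs_triang (a i - b i) (b i - c i)).
 replace (a i - b i + (b i - c i)) with (a i - c i) in H by ring. lra.
Qed.

Lemma norm1_le_length {I} (l : list I) v B :
  (forall i, Rabs (v i) <= B) -> norm1 l v <= INR (length l) * B.
Proof.
 intros H; induction l; simpl length; simpl norm1; [rewrite Rmult_0_l; lra|].
 rewrite S_INR. specialize (H a). lra.
Qed.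

Lemma norm1_scale {I} (l : list I) v t : norm1 l (fun i => t * v i) = Rabs t * norm1 l v.
Proof. induction l; simpl; [ring|]. rewrite IHl, Rabs_mult. ring. Qed.

Lemma norm1_continuous {I} (l : list I) (x : R -> I -> R) t :
  (forall i, continuity_pt (fun s => x s i) t) ->
  forall eps, 0 < eps -> exists d, 0 < d /\
    forall s, Rabs (s - t) < d -> norm1 l (fun i => x s i - x t i) < eps.
Proof.
 intros Hc. induction l as [|i l IH]; intros eps He.
 - exists 1; split; [lra|]; intros; simpl; lra.
 - destruct (IH (eps/2)) as [d1 [Hd1 H1]]; [lra|].
   destruct (Hc i (eps/2)) as [d2 [Hd2 H2]]; [lra|].
   exists (Rmin d1 d2); split; [apply Rmin_pos; lra|].
   intros s Hs. simpl.
   assert (A1 := H1 s (Rlt_le_trans _ _ _ Hs (Rmin_l _ _))).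
   destruct (Req_dec s t) as [->|Hne].
   + unfold Rminus at 1; rewrite Rplus_opp_r, Rabs_R0. lra.
   + assert (A2 : Rabs (x s i - x t i) < eps/2).
     { apply (H2 s). split; [split; [constructor|congruence]|].
       exact (Rlt_le_trans _ _ _ Hs (Rmin_r _ _)). }
     lra.
Qed.

Lemma le_of_le_geometric (a b C : R) : (forall n, a <= b + C * (/2)^n) -> a <= b.
Proof.
 intros H. destruct (Rle_dec a b) as [|Hn]; [auto|]. exfalso.
 assert (HC : 0 < C). { specialize (H O). simpl in H. lra. }
 destruct (pow_lt_1_zero (/2) ltac:(rewrite Rabs_pos_eq; lra) ((a - b)/C)) as [N HN].
 { apply Rdiv_lt_0_compat; lra. }
 specialize (HN N (le_n _)). specialize (H N).
 rewrite Rabs_pos_eq in HN by (apply pow_le; lra).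
 apply (Rmult_lt_compat_l C) in HN; [|lra].
 replace (C * ((a-b)/C)) with (a - b) in HN by (field; lra). lra.
Qed.

Section GeometricSequence.
Variables (u : nat -> R) (A : R).
Hypothesis Hstep : forall n, Rabs (u (S n) - u n) <= A * (/2)^n.

Lemma geometric_tail n k : Rabs (u (k + n)%nat - u n) <= 2 * A * (/2)^n.
Proof.
 assert (HA : 0 <= A).
 { specialize (Hstep O). simpl in Hstep. pose proof (Rabs_pos (u 1%nat - u O)). lra. }
 assert (Hk : Rabs (u (k + n)%nat - u n) <= 2 * A * (/2)^n * (1 - (/2)^k)).
 { induction k as [|k IH].
   - simpl. unfold Rminus; rewrite Rplus_opp_r, Rabs_R0. lra.
   - replace (S k + n)%nat with (S (k + n)) by lia.
     replace (u (S (k+n)) - u n) with ((u (S (k+n)) - u (k+n)%nat) + (u (k+n)%nat - u n)) by ring.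
     eapply Rle_trans; [apply Rabs_triang|].
     pose proof (Hstep (k+n)%nat) as H. rewrite pow_add in H. simpl pow. nra. }
 assert (0 <= A * (/2)^n * (/2)^k)
   by (apply Rmult_le_pos; [apply Rmult_le_pos|]; try apply pow_le; lra).
 lra.
Qed.

Lemma geometric_limit : exists l, Lim_seq u = Finite l /\ forall n, Rabs (l - u n) <= 2 * A * (/2)^n.
Proof.
 assert (HA : 0 <= A).
 { specialize (Hstep O). simpl in Hstep. pose proof (Rabs_pos (u 1%nat - u O)). lra. }
 assert (HC : Cauchy_crit u).
 { intros eps He.
   destruct (pow_lt_1_zero (/2) ltac:(rewrite Rabs_pos_eq; lra) (eps/(4*A+1))) as [N HN].
   { apply Rdiv_lt_0_compat; lra. }
   exists N. intros n m Hn Hm. unfold R_dist.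
   pose proof (geometric_tail N (n - N)) as G1. pose proof (geometric_tail N (m - N)) as G2.
   replace (n - N + N)%nat with n in G1 by lia. replace (m - N + N)%nat with m in G2 by lia.
   specialize (HN N (le_n _)). rewrite Rabs_pos_eq in HN by (apply pow_le; lra).
   replace (u n - u m) with ((u n - u N) - (u m - u N)) by ring.
   eapply Rle_lt_trans; [apply Rabs_triang|]. rewrite Rabs_Ropp.
   apply (Rmult_lt_compat_l (4*A+1)) in HN; [|lra].
   replace ((4*A+1) * (eps/(4*A+1))) with eps in HN by (field; lra).
   pose proof (pow_le (/2) N ltac:(lra)). nra. }
 destruct (R_complete u HC) as [l Hl]. exists l. split.
 - apply is_lim_seq_unique. apply is_lim_seq_Reals. auto.
 - intros n. destruct (Rle_dec (Rabs (l - u n)) (2*A*(/2)^n)) as [|Hn]; [auto|]. exfalso.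
   destruct (Hl (Rabs (l - u n) - 2*A*(/2)^n)) as [N HN]; [lra|].
   specialize (HN (N + n)%nat ltac:(lia)). unfold R_dist in HN.
   pose proof (geometric_tail n N) as G.
   pose proof (Rabs_triang (- (u (N+n)%nat - l)) (u (N+n)%nat - u n)) as T. rewrite Rabs_Ropp in T.
   replace (- (u (N+n)%nat - l) + (u (N+n)%nat - u n)) with (l - u n) in T by ring.
   apply Rnot_le_lt in Hn. lra.
Qed.

End GeometricSequence.

Definition HalfLineLip (u : R -> R) : Prop :=
  forall T, exists B, 0 <= B /\ forall s t, s <= T -> t <= T -> Rabs (u t - u s) <= B * Rabs (t - s).

Lemma HalfLineLip_continuous u t : HalfLineLip u -> continuity_pt u t.
Proof.
 intros Hu. destruct (Hu (t+1)) as [B [HB H]].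
 intros eps He. exists (Rmin 1 (eps/(B+1))).
 split; [apply Rmin_pos; [lra|apply Rdiv_lt_0_compat; lra]|].
 intros s [_ Hs]. simpl in *. unfold R_dist in *.
 assert (H1 : Rabs (s - t) < 1) by (eapply Rlt_le_trans; [exact Hs|apply Rmin_l]).
 assert (H2 : Rabs (s - t) < eps/(B+1)) by (eapply Rlt_le_trans; [exact Hs|apply Rmin_r]).
 assert (s <= t + 1) by (apply Rabs_lt_between in H1; lra).
 eapply Rle_lt_trans; [apply (H t s); lra|].
 apply Rle_lt_trans with ((B+1) * Rabs (s - t)); [pose proof (Rabs_pos (s-t)); nra|].
 apply (Rmult_lt_compat_l (B+1)) in H2; [|lra].
 replace ((B+1)*(eps/(B+1))) with eps in H2 by (field; lra). lra.
Qed.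

Lemma continuity_pt_pos_near u a : continuity_pt u a -> 0 < u a ->
  exists e, 0 < e /\ forall t, Rabs (t - a) < e -> 0 < u t.
Proof.
 intros Hc Ha. destruct (Hc (u a) Ha) as [e [He H]]. exists e. split; auto.
 intros t Ht. destruct (Req_dec t a) as [->|Hne]; auto.
 assert (Hd : Rabs (u t - u a) < u a) by (apply (H t); split; [split; [constructor|auto]|exact Ht]).
 apply Rabs_lt_between in Hd. lra.
Qed.

Lemma RInt_Rminus f g a b : ex_RInt f a b -> ex_RInt g a b ->
  RInt (fun x => f x - g x) a b = RInt f a b - RInt g a b.
Proof. exact (RInt_minus f g a b). Qed.

Lemma ex_RInt_Rminus f g a b : ex_RInt f a b -> ex_RInt g a b -> ex_RInt (fun x => f x - g x) a b.
Proof. exact (ex_RInt_minus f g a b). Qed.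

Lemma RInt_scaled_exp A k t : 0 < k -> RInt (fun s => A * exp (k*s)) 0 t = A / k * (exp (k*t) - 1).
Proof.
 intros Hk. apply is_RInt_unique.
 replace (A / k * (exp (k*t) - 1))
   with (minus ((fun s => A / k * exp (k*s)) t) ((fun s => A / k * exp (k*s)) 0)).
 2:{ unfold minus, plus, opp; simpl. rewrite Rmult_0_r, exp_0. ring. }
 apply (is_RInt_derive (fun s => A / k * exp (k*s)) (fun s => A * exp (k*s)) 0 t).
 - intros s _. auto_derive; [auto|]. field. lra.
 - intros s _. apply (ex_derive_continuous (fun s => A * exp (k*s))). auto_derive. auto.
Qed.

Lemma RInt_abs_le f h t : 0 <= t -> ex_RInt f 0 t -> ex_RInt h 0 t ->
  (forall s, 0 <= s <= t -> Rabs (f s) <= h s) -> Rabs (RInt f 0 t) <= RInt h 0 t.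
Proof.
 intros Ht Hf Hh H. apply Rabs_le. split.
 - assert (E : RInt (fun s => - h s) 0 t = - RInt h 0 t) by exact (RInt_opp h 0 t Hh).
   rewrite <- E. apply RInt_le; auto; [exact (ex_RInt_opp h 0 t Hh)|].
   intros s Hs. specialize (H s ltac:(lra)). apply Rabs_le_between in H. lra.
 - apply RInt_le; auto. intros s Hs. specialize (H s ltac:(lra)). apply Rabs_le_between in H. lra.
Qed.

Lemma exp_le_exp_of_le x y : x <= y -> exp x <= exp y.
Proof. intros [H| ->]; [left; apply exp_increasing; auto|right; reflexivity]. Qed.

Section Picard.
Variables (I : Type) (idx : list I) (F : (I -> R) -> (I -> R)) (L : R) (v0 : I -> R).
Hypothesis HL0 : 0 <= L.
Hypothesis HL : forall a b i, Rabs (F a i - F b i) <= L * norm1 idx (fun k => a k - b k).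

Lemma field_continuous (x : R -> I -> R) t : (forall i, continuity_pt (fun s => x s i) t) ->
  forall i, continuity_pt (fun s => F (x s) i) t.
Proof.
 intros Hc i eps He. destruct (norm1_continuous idx x t Hc (eps/(L+1))) as [d [Hd H]].
 { apply Rdiv_lt_0_compat; lra. }
 exists d. split; auto. intros s [_ Hs]. simpl in *. unfold R_dist in *.
 eapply Rle_lt_trans; [apply HL|]. specialize (H s Hs).
 pose proof (norm1_ge0 idx (fun k => x s k - x t k)).
 apply Rle_lt_trans with ((L+1) * norm1 idx (fun k => x s k - x t k)); [nra|].
 apply (Rmult_lt_compat_l (L+1)) in H; [|lra].
 replace ((L+1) * (eps/(L+1))) with eps in H by (field; lra). lra.
Qed.

Fixpoint picard (m : nat) : R -> I -> R :=
  match m with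
  | O => fun _ => v0
  | S m' => fun t i => v0 i + RInt (fun s => F (picard m' s) i) 0 t
  end.

Definition picard_rhs m i s := F (picard m s) i.

Lemma picard_continuous m i t : continuity_pt (fun s => picard m s i) t.
Proof.
 revert i t. induction m as [|m IH]; intros i t; simpl.
 - apply continuity_pt_const. intros a b; auto.
 - apply continuity_pt_plus; [apply continuity_pt_const; intros a b; auto|].
   apply continuity_pt_filterlim, (ex_derive_continuous (fun t => RInt (picard_rhs m i) 0 t)).
   exists (picard_rhs m i t). apply (is_derive_RInt (picard_rhs m i) _ 0).
   + apply filter_forall. intros b. apply (RInt_correct (picard_rhs m i) 0 b).
     apply (@ex_RInt_continuous R_CompleteNormedModule).
     intros z _. apply continuity_pt_filterlim, field_continuous. auto.
   + apply continuity_pt_filterlim, field_continuous. auto.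
Qed.

Lemma picard_rhs_continuous m i t : continuous (picard_rhs m i) t.
Proof.
 apply continuity_pt_filterlim.
 exact (field_continuous (picard m) t (fun i => picard_continuous m i t) i).
Qed.

Lemma ex_RInt_picard_rhs m i a b : ex_RInt (picard_rhs m i) a b.
Proof. apply (@ex_RInt_continuous R_CompleteNormedModule). intros; apply picard_rhs_continuous. Qed.

(* Weighting time by exp (rate * t) makes each Picard step a contraction of ratio 1/2. *)
Definition rate := 2 * (INR (length idx) * L + 1).
Definition first_step := norm1 idx (F v0) / rate.

Lemma rate_pos : 0 < rate.
Proof. unfold rate. pose proof (pos_INR (length idx)). nra. Qed.

Lemma first_step_ge0 : 0 <= first_step.
Proof.
 unfold first_step. pose proof rate_pos. pose proof (norm1_ge0 idx (F v0)).
 apply Rdiv_le_0_compat; lra.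
Qed.

Lemma picard_increment m t i :
  picard (S (S m)) t i - picard (S m) t i = RInt (fun s => picard_rhs (S m) i s - picard_rhs m i s) 0 t.
Proof. rewrite RInt_Rminus by apply ex_RInt_picard_rhs. unfold picard_rhs. simpl. ring. Qed.

Lemma picard_increment_coord m :
  (forall s, 0 <= s ->
     norm1 idx (fun k => picard (S m) s k - picard m s k) <= first_step * exp (rate*s) * (/2)^m) ->
  forall t i, 0 <= t ->
    Rabs (picard (S (S m)) t i - picard (S m) t i) <= L * first_step * (/2)^m / rate * exp (rate * t).
Proof.
 intros IH t i Ht. rewrite picard_increment.
 pose proof rate_pos. pose proof first_step_ge0. pose proof (pow_le (/2) m ltac:(lra)).
 eapply Rle_trans.
 - apply (RInt_abs_le _ (fun s => (L * first_step * (/2)^m) * exp (rate*s))); auto.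
   + apply ex_RInt_Rminus; apply ex_RInt_picard_rhs.
   + apply (@ex_RInt_continuous R_CompleteNormedModule). intros.
     apply (ex_derive_continuous (fun s => L * first_step * (/ 2) ^ m * exp (rate * s))).
     auto_derive. auto.
   + intros s Hs. unfold picard_rhs. eapply Rle_trans; [apply HL|].
     specialize (IH s ltac:(lra)). nra.
 - rewrite RInt_scaled_exp by auto.
   assert (0 <= L * first_step * (/2)^m / rate)
     by (apply Rdiv_le_0_compat; [apply Rmult_le_pos; [apply Rmult_le_pos|]|]; lra).
   nra.
Qed.

Lemma picard_increment_bound m t : 0 <= t ->
  norm1 idx (fun k => picard (S m) t k - picard m t k) <= first_step * exp (rate*t) * (/2)^m.
Proof.
 pose proof rate_pos. pose proof first_step_ge0.
 revert t. induction m as [|m IH]; intros t Ht.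
 - simpl. rewrite (norm1_ext _ _ (fun k => (t - 0) * F v0 k)).
   2:{ intros k. rewrite RInt_const. unfold scal; simpl. unfold mult; simpl. ring. }
   rewrite norm1_scale, Rabs_pos_eq by lra. unfold first_step.
   pose proof (exp_ineq1_le (rate*t)). pose proof (norm1_ge0 idx (F v0)).
   assert (t <= exp (rate*t) / rate). { apply (Rmult_le_reg_l rate); auto. field_simplify; lra. }
   replace (norm1 idx (F v0) / rate * exp (rate * t) * 1)
     with (norm1 idx (F v0) * (exp (rate*t) / rate)) by (field; lra).
   nra.
 - eapply Rle_trans; [apply norm1_le_length; intros i; apply (picard_increment_coord m IH t i Ht)|].
   pose proof (exp_pos (rate*t)). pose proof (pow_le (/2) m ltac:(lra)).
   assert (INR (length idx) * L <= rate / 2) by (unfold rate; lra).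
   assert (0 <= first_step * (/ 2) ^ m * exp (rate * t) / rate)
     by (apply Rdiv_le_0_compat; [apply Rmult_le_pos; [apply Rmult_le_pos|]|]; lra).
   replace (INR (length idx) * (L * first_step * (/ 2) ^ m / rate * exp (rate * t)))
     with ((INR (length idx) * L) * (first_step * (/ 2) ^ m * exp (rate * t) / rate)) by (field; lra).
   apply Rle_trans with (rate/2 * (first_step * (/ 2) ^ m * exp (rate * t) / rate));
     [apply Rmult_le_compat_r; auto|].
   simpl pow. right. field. lra.
Qed.

Lemma picard_dist_init m r : 0 <= r ->
  norm1 idx (fun k => picard m r k - v0 k) <= 2 * first_step * exp (rate*r) * (1 - (/2)^m).
Proof.
 pose proof first_step_ge0. pose proof (exp_pos (rate*r)).
 induction m as [|m IH]; intros Hr.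
 - simpl. rewrite (norm1_ext _ _ (fun k => 0 * 0)) by (intros; ring).
   rewrite norm1_scale, Rabs_R0. lra.
 - eapply Rle_trans; [apply (norm1_triangle idx (picard (S m) r) (picard m r) v0)|].
   pose proof (picard_increment_bound m r Hr). specialize (IH Hr). simpl pow. lra.
Qed.

Definition speed_bound T i := Rabs (F v0 i) + L * (2 * first_step * exp (rate*T)).

Lemma speed_bound_ge0 T i : 0 <= speed_bound T i.
Proof.
 unfold speed_bound. pose proof first_step_ge0. pose proof (exp_pos (rate*T)).
 pose proof (Rabs_pos (F v0 i)).
 assert (0 <= 2 * first_step * exp (rate*T)) by (apply Rmult_le_pos; [apply Rmult_le_pos|]; lra).
 nra.
Qed.

Lemma picard_rhs_bound m i T r : 0 <= r <= T -> Rabs (picard_rhs m i r) <= speed_bound T i.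
Proof.
 intros Hr. unfold picard_rhs, speed_bound. pose proof first_step_ge0. pose proof rate_pos.
 replace (F (picard m r) i) with (F v0 i + (F (picard m r) i - F v0 i)) by ring.
 eapply Rle_trans; [apply Rabs_triang|]. apply Rplus_le_compat_l.
 eapply Rle_trans; [apply HL|]. apply Rmult_le_compat_l; auto.
 eapply Rle_trans; [apply (picard_dist_init m r ltac:(lra))|].
 assert (exp (rate*r) <= exp (rate*T)) by (apply exp_le_exp_of_le; nra).
 assert (0 <= 2 * first_step * exp (rate*r) * (/2)^m)
   by (apply Rmult_le_pos; [|apply pow_le]; pose proof (exp_pos (rate*r)); nra).
 nra.
Qed.

Lemma picard_lipschitz m i T s t : 0 <= s <= T -> 0 <= t <= T ->
  Rabs (picard (S m) t i - picard (S m) s i) <= speed_bound T i * Rabs (t - s).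
Proof.
 intros Hs Ht.
 replace (picard (S m) t i - picard (S m) s i) with (RInt (picard_rhs m i) s t).
 2:{ pose proof (RInt_Chasles (picard_rhs m i) 0 s t
       (ex_RInt_picard_rhs _ _ _ _) (ex_RInt_picard_rhs _ _ _ _)) as E.
     unfold plus in E; simpl in E |- *. fold (picard_rhs m i). lra. }
 rewrite Rmult_comm.
 apply (norm_RInt_le_const_abs (V := R_NormedModule) (picard_rhs m i) s t).
 - intros r Hr. apply picard_rhs_bound. split.
   + apply Rle_trans with (Rmin s t); [apply Rmin_glb|]; lra.
   + apply Rle_trans with (Rmax s t); [lra|apply Rmax_lub; lra].
 - apply (RInt_correct (picard_rhs m i) s t), ex_RInt_picard_rhs.
Qed.

Definition step_bound T := L * first_step / rate * exp (rate*T).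

Lemma step_bound_ge0 T : 0 <= step_bound T.
Proof.
 unfold step_bound. pose proof first_step_ge0; pose proof rate_pos; pose proof (exp_pos (rate*T)).
 apply Rmult_le_pos; [|lra]. apply Rdiv_le_0_compat; [apply Rmult_le_pos|]; lra.
Qed.

Lemma picard_step m i T t : 0 <= t <= T ->
  Rabs (picard (S (S m)) t i - picard (S m) t i) <= step_bound T * (/2)^m.
Proof.
 intros Ht. eapply Rle_trans; [apply (picard_increment_coord m (picard_increment_bound m) t i); lra|].
 unfold step_bound. pose proof first_step_ge0; pose proof rate_pos.
 assert (exp (rate*t) <= exp (rate*T)) by (apply exp_le_exp_of_le; nra).
 pose proof (pow_le (/2) m ltac:(lra)).
 replace (L * first_step / rate * exp (rate * T) * (/ 2) ^ m)
   with ((L * first_step * (/2)^m / rate) * exp (rate*T)) by (field; lra).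
 apply Rmult_le_compat_l; auto.
 apply Rdiv_le_0_compat; [apply Rmult_le_pos; [apply Rmult_le_pos|]|]; lra.
Qed.

(* Negative times are clamped to 0, so the solution is constant on (-oo, 0]. *)
Definition picard_limit t i := real (Lim_seq (fun n => picard (S n) (Rmax 0 t) i)).

Lemma picard_limit_tail T t i n : 0 <= t <= T ->
  Rabs (picard_limit t i - picard (S n) t i) <= 2 * step_bound T * (/2)^n.
Proof.
 intros Ht. destruct (geometric_limit (fun n => picard (S n) t i) (step_bound T)) as [l [E B]].
 { intros k. apply picard_step; auto. }
 unfold picard_limit. rewrite (Rmax_right 0 t) by lra. rewrite E. apply B.
Qed.

Lemma picard_limit_lipschitz_pos T i s t : 0 <= s <= T -> 0 <= t <= T ->
  Rabs (picard_limit t i - picard_limit s i) <= speed_bound T i * Rabs (t - s).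
Proof.
 intros Hs Ht. apply (le_of_le_geometric _ _ (4 * step_bound T)). intros n.
 pose proof (picard_limit_tail T t i n Ht). pose proof (picard_limit_tail T s i n Hs).
 pose proof (picard_lipschitz n i T s t Hs Ht).
 replace (picard_limit t i - picard_limit s i) with
   ((picard_limit t i - picard (S n) t i) + (picard (S n) t i - picard (S n) s i)
    + - (picard_limit s i - picard (S n) s i)) by ring.
 eapply Rle_trans; [apply Rabs_triang|]. rewrite Rabs_Ropp.
 eapply Rle_trans; [apply Rplus_le_compat_r, Rabs_triang|]. lra.
Qed.

Lemma picard_limit_clamp t i : picard_limit t i = picard_limit (Rmax 0 t) i.
Proof.
 unfold picard_limit. rewrite (Rmax_right 0 (Rmax 0 t) (Rmax_l 0 t)). reflexivity.
Qed.

Lemma picard_limit_lipschitz i : HalfLineLip (fun t => picard_limit t i).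
Proof.
 intros T. exists (speed_bound (Rmax 0 T) i). split; [apply speed_bound_ge0|]. intros s t Hs Ht.
 rewrite (picard_limit_clamp t), (picard_limit_clamp s).
 assert (Hclamp : forall u, u <= T -> 0 <= Rmax 0 u <= Rmax 0 T).
 { intros u Hu. split; [apply Rmax_l|]. apply Rmax_lub; [apply Rmax_l|].
   eapply Rle_trans; [exact Hu|apply Rmax_r]. }
 eapply Rle_trans; [apply picard_limit_lipschitz_pos; auto|].
 apply Rmult_le_compat_l; [apply speed_bound_ge0|].
 unfold Rmax. destruct (Rle_dec 0 t); destruct (Rle_dec 0 s);
   unfold Rabs; repeat destruct Rcase_abs; lra.
Qed.

Lemma picard_limit_continuous i t : continuity_pt (fun s => picard_limit s i) t.
Proof. apply HalfLineLip_continuous, picard_limit_lipschitz. Qed.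

Lemma picard_limit_0 i : picard_limit 0 i = v0 i.
Proof.
 unfold picard_limit. rewrite (Lim_seq_ext _ (fun _ => v0 i)).
 - rewrite Lim_seq_const. reflexivity.
 - intros n. simpl. rewrite Rmax_left, RInt_point by lra. unfold zero; simpl. ring.
Qed.

Definition limit_rhs i s := F (fun k => picard_limit s k) i.

Lemma limit_rhs_continuous i t : continuous (limit_rhs i) t.
Proof.
 apply continuity_pt_filterlim.
 exact (field_continuous picard_limit t (fun k => picard_limit_continuous k t) i).
Qed.

Lemma ex_RInt_limit_rhs i a b : ex_RInt (limit_rhs i) a b.
Proof. apply (@ex_RInt_continuous R_CompleteNormedModule). intros; apply limit_rhs_continuous. Qed.

(* The integral equation is inherited by the limit since the errors decay like 2^-n. *)
Lemma picard_limit_integral t i : 0 <= t -> picard_limit t i = v0 i + RInt (limit_rhs i) 0 t.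
Proof.
 intros Ht.
 set (C := 2 * step_bound t + t * (L * (INR (length idx) * (2 * step_bound t)))).
 assert (Herr : Rabs (picard_limit t i - (v0 i + RInt (limit_rhs i) 0 t)) <= 0).
 { apply (le_of_le_geometric _ _ C). intros n.
   pose proof (picard_limit_tail t t i (S n) ltac:(lra)) as H1.
   assert (H2 : Rabs (RInt (fun s => picard_rhs (S n) i s - limit_rhs i s) 0 t)
                <= (t - 0) * (L * (INR (length idx) * (2 * step_bound t * (/2)^n)))).
   { apply abs_RInt_le_const;
       [lra|apply ex_RInt_Rminus; [apply ex_RInt_picard_rhs|apply ex_RInt_limit_rhs]|].
     intros r Hr. unfold picard_rhs, limit_rhs. eapply Rle_trans; [apply HL|].
     apply Rmult_le_compat_l; auto. apply norm1_le_length. intros k.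
     rewrite <- Rabs_Ropp, Ropp_minus_distr. apply picard_limit_tail. lra. }
   rewrite (RInt_Rminus (picard_rhs (S n) i) (limit_rhs i) 0 t
              (ex_RInt_picard_rhs _ _ _ _) (ex_RInt_limit_rhs _ _ _)) in H2.
   replace (picard_limit t i - (v0 i + RInt (limit_rhs i) 0 t)) with
     ((picard_limit t i - picard (S (S n)) t i)
      + (RInt (picard_rhs (S n) i) 0 t - RInt (limit_rhs i) 0 t)) 
     by (change (picard (S (S n)) t i) with (v0 i + RInt (picard_rhs (S n) i) 0 t); ring).
   eapply Rle_trans; [apply Rabs_triang|].
   simpl pow in H1. pose proof (step_bound_ge0 t). pose proof (pow_le (/2) n ltac:(lra)).
   unfold C. nra. }
 pose proof (Rabs_pos (picard_limit t i - (v0 i + RInt (limit_rhs i) 0 t))).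
 assert (E : Rabs (picard_limit t i - (v0 i + RInt (limit_rhs i) 0 t)) = 0) by lra.
 apply Rabs_eq_0 in E. lra.
Qed.

Lemma picard_limit_derivative t i : 0 < t ->
  derivable_pt_lim (fun s => picard_limit s i) t (F (fun k => picard_limit t k) i).
Proof.
 intros Ht. apply is_derive_Reals.
 apply (is_derive_ext_loc (fun s => v0 i + RInt (limit_rhs i) 0 s)).
 - exists (mkposreal t Ht). intros y Hy. cbn in Hy. unfold AbsRing_ball, abs, minus, plus, opp in Hy.
   simpl in Hy. apply Rabs_lt_between in Hy. rewrite (picard_limit_integral y i) by lra. reflexivity.
 - rewrite <- (plus_zero_l (F (fun k => picard_limit t k) i)).
   apply (is_derive_plus (fun _ => v0 i) (fun s => RInt (limit_rhs i) 0 s)).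
   + exact (@is_derive_const R_AbsRing R_NormedModule (v0 i) t).
   + apply (is_derive_RInt (limit_rhs i) _ 0).
     * apply filter_forall. intros b. apply (RInt_correct (limit_rhs i) 0 b), ex_RInt_limit_rhs.
     * apply limit_rhs_continuous.
Qed.

End Picard.

Theorem ode_global_solution {I : Type} (idx : list I) (F : (I -> R) -> (I -> R)) (L : R) :
  0 <= L -> (forall a b i, Rabs (F a i - F b i) <= L * norm1 idx (fun k => a k - b k)) ->
  forall v0 : I -> R, exists x : R -> I -> R,
    (forall i, x 0 i = v0 i) /\
    (forall t i, 0 < t -> derivable_pt_lim (fun s => x s i) t (F (x t) i)) /\
    (forall i, HalfLineLip (fun t => x t i)).
Proof.
 intros HL0 HL v0. exists (picard_limit I F v0). split; [|split].
 - apply picard_limit_0.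
 - intros t i Ht. exact (picard_limit_derivative I idx F L v0 HL0 HL t i Ht).
 - exact (picard_limit_lipschitz I idx F L v0 HL0 HL).
Qed.

Lemma HalfLineLip_shift u a : HalfLineLip u -> HalfLineLip (fun s => u (s - a)).
Proof.
 intros H T. destruct (H (T - a)) as [B [HB H1]]. exists B. split; auto.
 intros s t Hs Ht. replace (t - s) with ((t - a) - (s - a)) by ring. apply H1; lra.
Qed.

Lemma HalfLineLip_const c : HalfLineLip (fun _ => c).
Proof. intros T. exists 0. split; [lra|]. intros. unfold Rminus; rewrite Rplus_opp_r, Rabs_R0. lra. Qed.

Lemma HalfLineLip_ext u v : (forall t, u t = v t) -> HalfLineLip v -> HalfLineLip u.
Proof. intros E H T. destruct (H T) as [B [HB H1]]. exists B. split; auto. intros. rewrite !E. auto. Qed.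

Lemma rsum_le_scaled_lengths (u : R -> R) B m (lo hi : nat -> R) :
  (forall k, (k < m)%nat -> Rabs (u (hi k) - u (lo k)) <= B * (hi k - lo k)) ->
  rsum m (fun k => Rabs (u (hi k) - u (lo k))) <= B * rsum m (fun k => hi k - lo k).
Proof.
 induction m; intros H; simpl; [lra|].
 rewrite Rmult_plus_distr_l. apply Rplus_le_compat; [apply IHm; intros; apply H; lia|apply H; lia].
Qed.

Lemma HalfLineLip_AbsContOn u a b : HalfLineLip u -> AbsContOn a b u.
Proof.
 intros H eps He. destruct (H b) as [B [HB H1]].
 exists (eps / (B+1)). split; [apply Rdiv_lt_0_compat; lra|].
 intros m lo hi Hk _ Hs.
 eapply Rle_lt_trans.
 - apply (rsum_le_scaled_lengths u B). intros k Hkm. destruct (Hk k Hkm) as [A1 [A2 A3]].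
   rewrite <- (Rabs_pos_eq (hi k - lo k)) by lra. apply H1; lra.
 - apply Rle_lt_trans with (B * (eps/(B+1))); [apply Rmult_le_compat_l; lra|].
   apply Rlt_le_trans with ((B+1) * (eps/(B+1))); [|right; field; lra].
   apply Rmult_lt_compat_r; [apply Rdiv_lt_0_compat|]; lra.
Qed.

Lemma HalfLineLip_LocAbsCont u T : HalfLineLip u -> LocAbsCont T u.
Proof. intros H a b _ _. apply HalfLineLip_AbsContOn; auto. Qed.

Lemma NullSet_pair a b : NullSet (fun t => t = a \/ t = b).
Proof.
 intros eps He.
 set (lo := fun n => match n with O => a - eps/8 | 1%nat => b - eps/8 | _ => 0 end).
 set (hi := fun n => match n with O => a + eps/8 | 1%nat => b + eps/8 | _ => 0 end).
 exists lo, hi. split; [|split].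
 - intros [|[|n]]; unfold lo, hi; lra.
 - intros t [->| ->]; [exists O|exists 1%nat]; unfold lo, hi; lra.
 - assert (Htail : forall k, rsum (S (S k)) (fun n => hi n - lo n) = eps/2).
   { induction k as [|k IH]; [simpl; unfold lo, hi; lra|].
     change (rsum (S (S k)) (fun n => hi n - lo n) + (hi (S (S k)) - lo (S (S k))) = eps/2).
     rewrite IH. unfold lo, hi. lra. }
   intros [|[|m]]; [simpl; lra|simpl; unfold lo, hi; lra|]. rewrite Htail. lra.
Qed.

Lemma derivable_pt_lim_shift u a t l :
  derivable_pt_lim u (t - a) l -> derivable_pt_lim (fun s => u (s - a)) t l.
Proof.
 intros H eps He. destruct (H eps He) as [d Hd]. exists d. intros h Hh Hhd.
 replace (t + h - a) with (t - a + h) by ring. apply Hd; auto.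
Qed.

Lemma HasFlowDeriv_shift P zt t a : HasFlowDeriv P zt (t - a) -> HasFlowDeriv P (fun s => zt (s - a)) t.
Proof.
 intros [H1 [H2 [H3 H4]]]. split; [|split; [|split]].
 - intros i j E. apply (derivable_pt_lim_shift (fun s => eta (zt s) i j)). auto.
 - intros j Hj. destruct (H2 j Hj) as [l [Hl Hm]]. exists l. split; auto.
   apply (derivable_pt_lim_shift (fun s => om (zt s) j)). auto.
 - intros j k Hj Hk. apply (derivable_pt_lim_shift (fun s => xs (zt s) j k)). auto.
 - intros j Hj. apply (derivable_pt_lim_shift (fun s => IZR (sg (zt s) j))). auto.
Qed.

(* The relay states allowed at frequency [w]: the closure of [InI] once [lo < hi]. *)
Definition Admissible (lo hi w : R) (s : Z) : Prop :=
  (s = 0%Z /\ Rabs w <= hi) \/ (s = sgn w /\ lo <= Rabs w).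

Lemma sgn_cases w : (sgn w = 1%Z /\ 0 <= w) \/ (sgn w = (-1)%Z /\ w < 0).
Proof. unfold sgn. destruct (Rle_dec 0 w); [left|right]; split; auto; lra. Qed.

Lemma InI_Admissible lo hi w s : lo < hi -> InI lo hi w s -> Admissible lo hi w s.
Proof.
 intros Hl [A [B C]]. unfold Admissible.
 destruct (Rlt_dec hi (Rabs w)) as [H1|H1]; [right; split; auto; lra|].
 destruct (Rlt_dec (Rabs w) lo) as [H2|H2]; [left; split; auto; lra|].
 destruct (C ltac:(lra)) as [->| ->]; [left|right]; split; auto; lra.
Qed.

Lemma Admissible_InI lo hi w s : 0 < lo -> lo < hi -> Admissible lo hi w s -> InI lo hi w s.
Proof. intros H0 Hl [[-> Hw]|[-> Hw]]; unfold InI; repeat split; intros; try lra; auto. Qed.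

Lemma gsig_Admissible lo hi w s : lo < hi -> Admissible lo hi w s -> Admissible lo hi w (gsig lo hi w s).
Proof.
 intros Hl HA. unfold gsig.
 destruct (Req_EM_T (Rabs w) hi); destruct (Z.eq_dec s 0);
   try (right; split; [reflexivity|lra]);
 destruct (Req_EM_T (Rabs w) lo); destruct (Z.eq_dec s (sgn w));
   try (left; split; [reflexivity|lra]); auto.
Qed.

(* How far [w] is from the threshold at which the relay state [s] must switch;
   it is negative exactly off the admissible states. *)
Definition margin (lo hi w : R) (s : Z) : R :=
  match s with
  | Z0 => hi - Rabs w
  | Zpos xH => w - lo
  | Zneg xH => - w - lo
  | _ => -1
  end.

Lemma margin_ge0_iff lo hi w s : 0 < lo -> 0 <= margin lo hi w s <-> Admissible lo hi w s.
Proof.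
 intros H0. split.
 - intros H. unfold Admissible. destruct s as [|p|p]; simpl in H; [left; split; auto; lra| |];
     destruct p; try lra; right; unfold sgn.
   + destruct (Rle_dec 0 w); [|lra]. split; auto. rewrite Rabs_pos_eq; lra.
   + destruct (Rle_dec 0 w); [lra|]. split; auto. rewrite Rabs_left; lra.
 - intros [[-> Hw]|[-> Hw]]; simpl; [lra|].
   destruct (sgn_cases w) as [[-> Hw']|[-> Hw']]; simpl.
   + rewrite Rabs_pos_eq in Hw; lra.
   + rewrite Rabs_left in Hw; lra.
Qed.

Lemma margin_eq0 lo hi w s : Admissible lo hi w s -> margin lo hi w s = 0 ->
  (Rabs w = hi /\ s = 0%Z) \/ (Rabs w = lo /\ s = sgn w).
Proof.
 intros [[-> Hw]|[-> Hw]] E; simpl in E; [left; split; auto; lra|].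
 right. split; auto.
 destruct (sgn_cases w) as [[Hs Hw']|[Hs Hw']]; rewrite Hs in E; simpl in E.
 - rewrite Rabs_pos_eq; lra.
 - rewrite Rabs_left; lra.
Qed.

Lemma margin_lipschitz lo hi s w w' : Rabs (margin lo hi w s - margin lo hi w' s) <= Rabs (w - w').
Proof.
 destruct s as [|p|p]; simpl.
 - replace (hi - Rabs w - (hi - Rabs w')) with (- (Rabs w - Rabs w')) by ring.
   rewrite Rabs_Ropp. apply Rabs_triang_inv2.
 - destruct p; try (unfold Rminus at 1; rewrite Rplus_opp_r, Rabs_R0; apply Rabs_pos).
   right. f_equal. ring.
 - destruct p; try (unfold Rminus at 1; rewrite Rplus_opp_r, Rabs_R0; apply Rabs_pos).
   replace (- w - lo - (- w' - lo)) with (- (w - w')) by ring. rewrite Rabs_Ropp. lra.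
Qed.

Inductive Coord := Ceta (i j : nat) | Com (j : nat) | Cxs (j k : nat).

Definition state_of (v : Coord -> R) (s : nat -> Z) : HState :=
  mkHState (fun i j => v (Ceta i j)) (fun j => v (Com j)) (fun j k => v (Cxs j k)) s.

Definition coords_of (z : HState) (c : Coord) : R :=
  match c with Ceta i j => eta z i j | Com j => om z j | Cxs j k => xs z j k end.

(* The flow map with the relay state [s] frozen; coordinates outside the network are kept at rest. *)
Definition network_field (P : Net) (s : nat -> Z) (v : Coord -> R) (c : Coord) : R :=
  match c with
  | Ceta i j => if andb (i <? nN P)%nat (j <? nN P)%nat then v (Com i) - v (Com j) else 0
  | Com j => if (j <? nN P)%nat then omega_rhs P (state_of v s) j / Mc P j else 0
  | Cxs j k =>
      if andb (j <? nN P)%nat (k <? ns P j)%nat then fj P j (fun k => v (Cxs j k)) (- v (Com j)) k else 0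
  end.

Definition network_coords (P : Net) : list Coord :=
  flat_map (fun i => map (Ceta i) (seq 0 (nN P))) (seq 0 (nN P)) ++
  map Com (seq 0 (nN P)) ++
  flat_map (fun j => map (Cxs j) (seq 0 (ns P j))) (seq 0 (nN P)).

Lemma in_coords_eta P i j : (i < nN P)%nat -> (j < nN P)%nat -> In (Ceta i j) (network_coords P).
Proof.
 intros. apply in_or_app. left. apply in_flat_map. exists i.
 split; [apply in_seq; lia|]. apply in_map, in_seq; lia.
Qed.

Lemma in_coords_om P j : (j < nN P)%nat -> In (Com j) (network_coords P).
Proof. intros. apply in_or_app. right. apply in_or_app. left. apply in_map, in_seq; lia. Qed.

Lemma in_coords_xs P j k : (j < nN P)%nat -> (k < ns P j)%nat -> In (Cxs j k) (network_coords P).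
Proof.
 intros. apply in_or_app. right. apply in_or_app. right. apply in_flat_map. exists j.
 split; [apply in_seq; lia|]. apply in_map, in_seq; lia.
Qed.

Lemma rsum_ge0 m f : (forall k, (k < m)%nat -> 0 <= f k) -> 0 <= rsum m f.
Proof.
 induction m; intros H; simpl; [lra|].
 assert (0 <= rsum m f) by (apply IHm; intros; apply H; lia).
 specialize (H m ltac:(lia)). lra.
Qed.

Lemma rsum_le_const m f B : (forall k, (k < m)%nat -> f k <= B) -> rsum m f <= INR m * B.
Proof.
 induction m; intros H; simpl rsum; [simpl; lra|]. rewrite S_INR.
 assert (rsum m f <= INR m * B) by (apply IHm; intros; apply H; lia).
 specialize (H m ltac:(lia)). lra.
Qed.

Lemma rsum_mulr m f c : rsum m (fun k => f k * c) = rsum m f * c.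
Proof. induction m; simpl; [ring|]. rewrite IHm; ring. Qed.

Lemma Rabs_rsum_minus_le m f g h : (forall k, (k < m)%nat -> Rabs (f k - g k) <= h k) ->
  Rabs (rsum m f - rsum m g) <= rsum m h.
Proof.
 induction m; intros H; simpl; [unfold Rminus; rewrite Rplus_opp_r, Rabs_R0; lra|].
 replace (rsum m f + f m - (rsum m g + g m)) with ((rsum m f - rsum m g) + (f m - g m)) by ring.
 eapply Rle_trans; [apply Rabs_triang|].
 apply Rplus_le_compat; [apply IHm; intros; apply H; lia|apply H; lia].
Qed.

Lemma sin_lipschitz x y : Rabs (sin x - sin y) <= Rabs (x - y).
Proof.
 destruct (MVT_abs sin cos y x) as [c [E _]]; [intros c _; apply derivable_pt_lim_sin|].
 rewrite E. assert (Rabs (cos c) <= 1) by (apply Rabs_le; apply COS_bound).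
 pose proof (Rabs_pos (x - y)). nra.
Qed.

Lemma rsum_sin_lipschitz m (e : nat -> bool) (B x y : nat -> R) D :
  (forall k, (k < m)%nat -> e k = true -> Rabs (x k - y k) <= D) -> 0 <= D ->
  Rabs (rsum m (fun k => if e k then B k * sin (x k) else 0)
        - rsum m (fun k => if e k then B k * sin (y k) else 0))
  <= rsum m (fun k => Rabs (B k)) * D.
Proof.
 intros H HD. rewrite <- rsum_mulr. apply Rabs_rsum_minus_le. intros k Hk.
 destruct (e k) eqn:Ek.
 - rewrite <- Rmult_minus_distr_l, Rabs_mult. apply Rmult_le_compat_l; [apply Rabs_pos|].
   eapply Rle_trans; [apply sin_lipschitz|auto].
 - unfold Rminus; rewrite Rplus_opp_r, Rabs_R0. apply Rmult_le_pos; [apply Rabs_pos|auto].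
Qed.

Lemma uniform_constant_below (Q : nat -> R -> Prop) (Hmono : forall j L L', L <= L' -> Q j L -> Q j L') n :
  (forall j, (j < n)%nat -> exists L, 0 <= L /\ Q j L) ->
  exists L, 0 <= L /\ forall j, (j < n)%nat -> Q j L.
Proof.
 induction n; intros H.
 - exists 0. split; [lra|]. intros; lia.
 - destruct IHn as [L1 [H1 Q1]]; [intros; apply H; lia|].
   destruct (H n ltac:(lia)) as [L2 [H2 Q2]].
   exists (L1 + L2). split; [lra|]. intros j Hj.
   destruct (Nat.eq_dec j n) as [->|]; [apply (Hmono _ L2); auto; lra|].
   apply (Hmono _ L1); [lra|]. apply Q1; lia.
Qed.

Section NetworkField.
Variable P : Net.
Hypothesis HP : NetAssumptions P.

Definition dist1 (a b : Coord -> R) := norm1 (network_coords P) (fun k => a k - b k).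

Lemma dist1_ge0 a b : 0 <= dist1 a b.
Proof. apply norm1_ge0. Qed.

Lemma coord_le_dist1 a b c : In c (network_coords P) -> Rabs (a c - b c) <= dist1 a b.
Proof. intros H. exact (norm1_coord (network_coords P) (fun k => a k - b k) c H). Qed.

Lemma node_input_dist_le a b j : (j < nN P)%nat ->
  rsum (ns P j) (fun i => Rabs (a (Cxs j i) - b (Cxs j i))) + Rabs (- a (Com j) - - b (Com j))
  <= (INR (ns P j) + 1) * dist1 a b.
Proof.
 intros Hj.
 assert (rsum (ns P j) (fun i => Rabs (a (Cxs j i) - b (Cxs j i))) <= INR (ns P j) * dist1 a b).
 { apply rsum_le_const. intros k Hk. apply coord_le_dist1, in_coords_xs; auto. }
 assert (Rabs (- a (Com j) - - b (Com j)) <= dist1 a b).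
 { replace (- a (Com j) - - b (Com j)) with (- (a (Com j) - b (Com j))) by ring.
   rewrite Rabs_Ropp. apply coord_le_dist1, in_coords_om; auto. }
 lra.
Qed.

Lemma Rabs_le_abs_constant D Lc u : Rabs D <= Lc * u -> 0 <= u -> Rabs D <= Rabs Lc * u.
Proof. intros H Hu. eapply Rle_trans; [exact H|]. apply Rmult_le_compat_r; [lra|apply RRle_abs]. Qed.

Lemma omega_rhs_lipschitz j : (j < nN P)%nat -> exists C, 0 <= C /\ forall s a b,
  Rabs (omega_rhs P (state_of a s) j - omega_rhs P (state_of b s) j) <= C * dist1 a b.
Proof.
 intros Hj. destruct HP as [_ [_ [_ [_ [_ [_ [_ [_ Hg]]]]]]]].
 destruct (Hg j Hj) as [Lg HLg].
 set (SB1 := rsum (nN P) (fun k => Rabs (Bc P j k))).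
 set (SB2 := rsum (nN P) (fun i => Rabs (Bc P i j))).
 assert (0 <= SB1) by (apply rsum_ge0; intros; apply Rabs_pos).
 assert (0 <= SB2) by (apply rsum_ge0; intros; apply Rabs_pos).
 assert (0 <= Rabs Lg * (INR (ns P j) + 1))
   by (apply Rmult_le_pos; [apply Rabs_pos|pose proof (pos_INR (ns P j)); lra]).
 exists (Rabs Lg * (INR (ns P j) + 1) + SB1 + SB2). split; [lra|]. intros s a b.
 pose proof (dist1_ge0 a b).
 assert (Hedge : forall i j', (i < nN P)%nat -> (j' < nN P)%nat ->
                   Rabs (a (Ceta i j') - b (Ceta i j')) <= dist1 a b)
   by (intros; apply coord_le_dist1, in_coords_eta; auto).
 assert (Hs : Rabs (sflow P (state_of a s) j - sflow P (state_of b s) j)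
              <= Rabs Lg * (INR (ns P j) + 1) * dist1 a b).
 { unfold sflow; simpl. rewrite Rmult_assoc. eapply Rle_trans.
   - apply Rabs_le_abs_constant; [apply HLg|].
     apply Rplus_le_le_0_compat; [apply rsum_ge0; intros; apply Rabs_pos|apply Rabs_pos].
   - apply Rmult_le_compat_l; [apply Rabs_pos|]. apply node_input_dist_le; auto. }
 assert (Hout := rsum_sin_lipschitz (nN P) (Enet P j) (Bc P j)
                   (fun k => a (Ceta j k)) (fun k => b (Ceta j k)) (dist1 a b)
                   (fun k Hk _ => Hedge j k Hj Hk) ltac:(lra)).
 assert (Hin := rsum_sin_lipschitz (nN P) (fun i => Enet P i j) (fun i => Bc P i j)
                   (fun i => a (Ceta i j)) (fun i => b (Ceta i j)) (dist1 a b)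
                   (fun i Hi _ => Hedge i j Hi Hj) ltac:(lra)).
 unfold omega_rhs, pflow; simpl sg; simpl eta. cbv beta in Hout, Hin. fold SB1 SB2 in Hout, Hin.
 match goal with
 | |- Rabs (- ?p + ?s1 - ?d - ?o1 + ?i1 - (- ?p + ?s2 - ?d - ?o2 + ?i2)) <= _ =>
     replace (- p + s1 - d - o1 + i1 - (- p + s2 - d - o2 + i2))
       with ((s1 - s2) - (o1 - o2) + (i1 - i2)) by ring
 end.
 eapply Rle_trans; [apply Rabs_triang|]. eapply Rle_trans; [apply Rplus_le_compat_r, Rabs_triang|].
 rewrite Rabs_Ropp. lra.
Qed.

Definition NodeFieldLip (j : nat) (L : R) : Prop := forall s a b,
  Rabs (network_field P s a (Com j) - network_field P s b (Com j)) <= L * dist1 a b /\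
  forall k, Rabs (network_field P s a (Cxs j k) - network_field P s b (Cxs j k)) <= L * dist1 a b.

Lemma NodeFieldLip_mono j L L' : L <= L' -> NodeFieldLip j L -> NodeFieldLip j L'.
Proof.
 intros HL H s a b. destruct (H s a b) as [H1 H2]. pose proof (dist1_ge0 a b). split.
 - eapply Rle_trans; [exact H1|]. apply Rmult_le_compat_r; auto.
 - intros k. eapply Rle_trans; [apply H2|]. apply Rmult_le_compat_r; auto.
Qed.

Lemma node_field_lipschitz j : (j < nN P)%nat -> exists L, 0 <= L /\ NodeFieldLip j L.
Proof.
 intros Hj. destruct (omega_rhs_lipschitz j Hj) as [C [HC Hom]].
 pose proof HP as [_ [_ [_ [HM [_ [_ [_ [Hf _]]]]]]]].
 destruct (Hf j Hj) as [Lf HLf]. specialize (HM j Hj).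
 assert (0 <= Rabs Lf * (INR (ns P j) + 1))
   by (apply Rmult_le_pos; [apply Rabs_pos|pose proof (pos_INR (ns P j)); lra]).
 assert (0 <= C / Mc P j) by (apply Rdiv_le_0_compat; lra).
 exists (C / Mc P j + Rabs Lf * (INR (ns P j) + 1)). split; [lra|].
 intros s a b. pose proof (dist1_ge0 a b). simpl network_field.
 rewrite (proj2 (Nat.ltb_lt _ _) Hj). split.
 - unfold Rdiv. rewrite <- Rmult_minus_distr_r, Rabs_mult, (Rabs_pos_eq (/ Mc P j))
     by (left; apply Rinv_0_lt_compat; lra).
   apply Rle_trans with (C / Mc P j * dist1 a b).
   + replace (C / Mc P j * dist1 a b) with (C * dist1 a b * / Mc P j) by (field; lra).
     apply Rmult_le_compat_r; [left; apply Rinv_0_lt_compat; lra|apply Hom].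
   + apply Rmult_le_compat_r; lra.
 - intros k. simpl andb. destruct (k <? ns P j)%nat eqn:Ek.
   + apply Nat.ltb_lt in Ek. eapply Rle_trans.
     { apply Rabs_le_abs_constant; [apply HLf; auto|].
       apply Rplus_le_le_0_compat; [apply rsum_ge0; intros; apply Rabs_pos|apply Rabs_pos]. }
     apply Rle_trans with (Rabs Lf * (INR (ns P j) + 1) * dist1 a b); [|apply Rmult_le_compat_r; lra].
     rewrite Rmult_assoc. apply Rmult_le_compat_l; [apply Rabs_pos|]. apply node_input_dist_le; auto.
   + unfold Rminus; rewrite Rplus_opp_r, Rabs_R0. apply Rmult_le_pos; lra.
Qed.

Lemma network_field_lipschitz : exists L, 0 <= L /\
  forall s a b c, Rabs (network_field P s a c - network_field P s b c) <= L * dist1 a b.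
Proof.
 destruct (uniform_constant_below NodeFieldLip NodeFieldLip_mono (nN P) node_field_lipschitz)
   as [L [HL HQ]].
 exists (L + 2). split; [lra|]. intros s a b c. pose proof (dist1_ge0 a b).
 assert (Hrest : Rabs (0 - 0) <= (L + 2) * dist1 a b)
   by (unfold Rminus; rewrite Rplus_opp_r, Rabs_R0; apply Rmult_le_pos; lra).
 destruct c as [i j|j|j k]; simpl network_field.
 - destruct (i <? nN P)%nat eqn:Ei; destruct (j <? nN P)%nat eqn:Ej; simpl; auto.
   apply Nat.ltb_lt in Ei. apply Nat.ltb_lt in Ej.
   replace (a (Com i) - a (Com j) - (b (Com i) - b (Com j)))
     with ((a (Com i) - b (Com i)) - (a (Com j) - b (Com j))) by ring.
   eapply Rle_trans; [apply Rabs_triang|]. rewrite Rabs_Ropp.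
   pose proof (coord_le_dist1 a b (Com i) (in_coords_om P i Ei)).
   pose proof (coord_le_dist1 a b (Com j) (in_coords_om P j Ej)).
   assert (0 <= L * dist1 a b) by (apply Rmult_le_pos; lra). lra.
 - destruct (j <? nN P)%nat eqn:Ej; auto. apply Nat.ltb_lt in Ej.
   destruct (HQ j Ej s a b) as [Hj _]. simpl in Hj. rewrite (proj2 (Nat.ltb_lt _ _) Ej) in Hj. nra.
 - destruct (j <? nN P)%nat eqn:Ej; simpl; auto. apply Nat.ltb_lt in Ej.
   destruct (HQ j Ej s a b) as [_ Hk]. specialize (Hk k). simpl in Hk.
   rewrite (proj2 (Nat.ltb_lt _ _) Ej) in Hk. simpl in Hk. nra.
Qed.

End NetworkField.

Record IsFlow (P : Net) (flw : HState -> R -> HState) : Prop := {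
  flow_at_0 : forall z, flw z 0 = z;
  flow_sg : forall z t, sg (flw z t) = sg z;
  flow_deriv : forall z t, 0 < t -> HasFlowDeriv P (flw z) t;
  flow_eta_lip : forall z i j, HalfLineLip (fun t => eta (flw z t) i j);
  flow_om_lip : forall z j, HalfLineLip (fun t => om (flw z t) j);
  flow_xs_lip : forall z j k, HalfLineLip (fun t => xs (flw z t) j k)
}.

Lemma network_flow_exists P : NetAssumptions P -> exists flw, IsFlow P flw.
Proof.
 intros HP. destruct (network_field_lipschitz P HP) as [L [HL0 HL]].
 assert (Hode : forall z : HState, exists x : R -> Coord -> R,
    (forall c, x 0 c = coords_of z c) /\
    (forall t c, 0 < t -> derivable_pt_lim (fun s => x s c) t (network_field P (sg z) (x t) c)) /\
    (forall c, HalfLineLip (fun t => x t c)))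
   by (intros z; exact (ode_global_solution _ _ L HL0 (HL (sg z)) (coords_of z))).
 destruct (choice _ Hode) as [x Hx].
 pose proof HP as [HE [_ [_ [HM _]]]].
 exists (fun z t => state_of (x z t) (sg z)). split; simpl.
 - intros z. destruct (Hx z) as [H0 _].
   replace (x z 0) with (coords_of z) by (apply functional_extensionality; auto).
   destruct z; reflexivity.
 - reflexivity.
 - intros z t Ht. destruct (Hx z) as [_ [Hd _]]. split; [|split; [|split]]; simpl.
   + intros i j Eij. destruct (HE i j Eij) as [Hi Hj].
     pose proof (Hd t (Ceta i j) Ht) as D. simpl in D.
     rewrite (proj2 (Nat.ltb_lt _ _) Hi), (proj2 (Nat.ltb_lt _ _) Hj) in D. exact D.
   + intros j Hj. exists (network_field P (sg z) (x z t) (Com j)). split; [apply Hd; auto|].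
     simpl. rewrite (proj2 (Nat.ltb_lt _ _) Hj). specialize (HM j Hj). field. lra.
   + intros j k Hj Hk. pose proof (Hd t (Cxs j k) Ht) as D. simpl in D.
     rewrite (proj2 (Nat.ltb_lt _ _) Hj), (proj2 (Nat.ltb_lt _ _) Hk) in D. exact D.
   + intros j _. apply derivable_pt_lim_const.
 - intros z i j. apply (Hx z).
 - intros z j. apply (Hx z).
 - intros z j k. apply (Hx z).
Qed.

Section HybridSolution.
Variables (P : Net) (flw : HState -> R -> HState).
Hypothesis HP : NetAssumptions P.
Hypothesis Hflw : IsFlow P flw.

Lemma thresholds j : (j < nN P)%nat -> 0 < w0 P j /\ w0 P j < w1 P j.
Proof. destruct HP as [_ [_ [_ [_ [_ [_ [H _]]]]]]]. apply H. Qed.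

Definition node_margin (z : HState) (j : nat) : R := margin (w0 P j) (w1 P j) (om z j) (sg z j).

Fixpoint min_margin (n : nat) (z : HState) : R :=
  match n with O => 1 | S n' => Rmin (node_margin z n') (min_margin n' z) end.

Definition hyst_margin z := min_margin (nN P) z.

Lemma min_margin_ge0_iff n z : 0 <= min_margin n z <-> forall j, (j < n)%nat -> 0 <= node_margin z j.
Proof.
 induction n as [|n IH]; simpl; [split; intros; [lia|lra]|]. split.
 - intros H j Hj. unfold Rmin in H. destruct (Rle_dec (node_margin z n) (min_margin n z)).
   + destruct (Nat.eq_dec j n) as [->|]; [auto|]. apply IH; [lra|lia].
   + destruct (Nat.eq_dec j n) as [->|]; [lra|]. apply IH; [auto|lia].
 - intros H. apply Rmin_glb; [apply H; lia|]. apply IH. intros; apply H; lia.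
Qed.

Lemma min_margin_attained n z : min_margin n z <= 0 -> exists j, (j < n)%nat /\ node_margin z j = min_margin n z.
Proof.
 induction n as [|n IH]; simpl; intros H; [lra|].
 unfold Rmin in *. destruct (Rle_dec (node_margin z n) (min_margin n z)).
 - exists n; split; auto.
 - destruct (IH ltac:(lra)) as [j [Hj E]]. exists j; split; auto.
Qed.

Lemma InLambda_iff_margin z : InLambda P z <-> 0 <= hyst_margin z.
Proof.
 unfold hyst_margin. rewrite min_margin_ge0_iff. split; intros H j Hj; destruct (thresholds j Hj).
 - apply margin_ge0_iff; auto. apply InI_Admissible; auto.
 - apply Admissible_InI, margin_ge0_iff, H; auto.
Qed.

Lemma margin_eq0_InD z : hyst_margin z = 0 -> InD P z.
Proof.
 intros H. split; [apply InLambda_iff_margin; lra|].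
 destruct (min_margin_attained (nN P) z ltac:(unfold hyst_margin in H; lra)) as [j [Hj E]].
 exists j. split; auto. destruct (thresholds j Hj).
 apply (margin_eq0 (w0 P j) (w1 P j)).
 - apply margin_ge0_iff; [lra|]. unfold node_margin in E. unfold hyst_margin in H. lra.
 - unfold node_margin in E. unfold hyst_margin in H. lra.
Qed.

Lemma gmap_InLambda z : InLambda P z -> InLambda P (gmap P z).
Proof.
 intros H j Hj. unfold gmap; simpl. rewrite (proj2 (Nat.ltb_lt _ _) Hj).
 destruct (thresholds j Hj). apply Admissible_InI, gsig_Admissible, InI_Admissible; auto.
Qed.

Lemma margin_flow_lip z : HalfLineLip (fun t => hyst_margin (flw z t)).
Proof.
 unfold hyst_margin. induction (nN P) as [|n IH]; simpl; [apply HalfLineLip_const|].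
 intros T. destruct (IH T) as [B2 [HB2 H2]]. destruct (flow_om_lip P flw Hflw z n T) as [B1 [HB1 H1]].
 exists (B1 + B2). split; [lra|]. intros s t Hs Ht.
 assert (Hmin : forall a b c d, Rabs (Rmin a b - Rmin c d) <= Rabs (a - c) + Rabs (b - d))
   by (intros; unfold Rmin; destruct (Rle_dec a b); destruct (Rle_dec c d);
       unfold Rabs; repeat destruct Rcase_abs; lra).
 eapply Rle_trans; [apply Hmin|]. unfold node_margin. rewrite !(flow_sg P flw Hflw).
 eapply Rle_trans; [apply Rplus_le_compat_r, margin_lipschitz|].
 specialize (H1 s t Hs Ht). specialize (H2 s t Hs Ht). lra.
Qed.

Lemma margin_flow_continuous z t : continuity_pt (fun s => hyst_margin (flw z s)) t.
Proof. apply HalfLineLip_continuous, margin_flow_lip. Qed.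

(* The first time the margin reaches 0 along the flow from [z], as the infimum of the
   hitting times (computed as a supremum of their negatives). *)
Definition hit_times z u := exists t, 0 <= t /\ hyst_margin (flw z t) <= 0 /\ u = - t.

Lemma hit_times_bound z : bound (hit_times z).
Proof. exists 0. intros u [t [Ht [_ ->]]]. lra. Qed.

Lemma hit_times_inhabited z : (exists t, 0 <= t /\ hyst_margin (flw z t) <= 0) -> exists u, hit_times z u.
Proof. intros [t [Ht Hm]]. exists (-t), t. auto. Qed.

Definition first_hit (z : HState) : option R :=
  match excluded_middle_informative (exists t, 0 <= t /\ hyst_margin (flw z t) <= 0) with
  | left H => Some (- proj1_sig (completeness (hit_times z) (hit_times_bound z) (hit_times_inhabited z H)))
  | right _ => None
  end.

Lemma first_hit_some z tau : first_hit z = Some tau ->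
  0 <= tau /\ (forall t, 0 <= t < tau -> 0 < hyst_margin (flw z t)) /\ hyst_margin (flw z tau) <= 0.
Proof.
 unfold first_hit. destruct (excluded_middle_informative _) as [H|H]; [|discriminate].
 destruct (completeness _ _ _) as [m [Hub Hlub]]. simpl. intros E. injection E as <-.
 assert (Hm : m <= 0) by (apply Hlub; intros u [t [Ht [_ ->]]]; lra).
 assert (Hbefore : forall t, 0 <= t < - m -> 0 < hyst_margin (flw z t)).
 { intros t Ht. destruct (Rlt_dec 0 (hyst_margin (flw z t))) as [|Hn]; auto.
   assert (- t <= m) by (apply Hub; exists t; repeat split; lra). lra. }
 split; [lra|]. split; auto.
 destruct (Rle_dec (hyst_margin (flw z (-m))) 0) as [|Hn]; auto. exfalso.
 destruct (continuity_pt_pos_near _ _ (margin_flow_continuous z (-m)) ltac:(lra)) as [e [He Hnear]].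
 assert (m <= - (- m + e)); [|lra].
 apply Hlub. intros u [t [Ht [Hmu ->]]].
 destruct (Rlt_dec t (-m)) as [Ht1|Ht1]; [specialize (Hbefore t ltac:(lra)); lra|].
 destruct (Rlt_dec t (-m + e)) as [Ht2|Ht2]; [|lra].
 specialize (Hnear t ltac:(apply Rabs_def1; lra)). lra.
Qed.

Lemma first_hit_none z : first_hit z = None -> forall t, 0 <= t -> 0 < hyst_margin (flw z t).
Proof.
 unfold first_hit. destruct (excluded_middle_informative _) as [H|H]; [discriminate|].
 intros _ t Ht. destruct (Rlt_dec 0 (hyst_margin (flw z t))); auto.
 exfalso. apply H. exists t. split; auto. lra.
Qed.

Lemma first_hit_margin z tau : InLambda P z -> first_hit z = Some tau -> hyst_margin (flw z tau) = 0.
Proof.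
 intros HL Hh. destruct (first_hit_some z tau Hh) as [H0 [Hbefore Hat]].
 apply Rle_antisym; auto.
 destruct (Rle_dec 0 (hyst_margin (flw z tau))) as [|Hn]; auto. exfalso.
 destruct (Req_dec tau 0) as [E|E].
 - rewrite E, (flow_at_0 P flw Hflw) in Hn. apply InLambda_iff_margin in HL. lra.
 - destruct (continuity_pt_pos_near (fun s => - hyst_margin (flw z s)) tau) as [e [He Hnear]];
     [apply continuity_pt_opp, margin_flow_continuous|lra|].
   set (t := Rmax 0 (tau - e/2)).
   assert (Ht : 0 <= t < tau) by (split; [apply Rmax_l|apply Rmax_lub_lt; lra]).
   specialize (Hbefore t Ht).
   assert (Rabs (t - tau) < e)
     by (apply Rabs_def1; [lra|pose proof (Rmax_r 0 (tau - e/2)); unfold t; lra]).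
   specialize (Hnear t ltac:(auto)). lra.
Qed.

Variable z0 : HState.
Hypothesis Hz0 : InLambda P z0.

(* [epoch l] is the start time and initial state of the l-th flow interval; after the last
   jump, if any, the sequence is stationary. *)
Fixpoint epoch (l : nat) : R * HState :=
  match l with
  | O => (0, z0)
  | S l' => let p := epoch l' in
      match first_hit (snd p) with Some tau => (fst p + tau, gmap P (flw (snd p) tau)) | None => p end
  end.

Definition reached l := forall k, (k < l)%nat -> first_hit (snd (epoch k)) <> None.

Lemma epoch_S_some l tau : first_hit (snd (epoch l)) = Some tau ->
  epoch (S l) = (fst (epoch l) + tau, gmap P (flw (snd (epoch l)) tau)).
Proof. intros E. simpl. rewrite E. reflexivity. Qed.

Lemma epoch_S_none l : first_hit (snd (epoch l)) = None -> epoch (S l) = epoch l.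
Proof. intros E. simpl. rewrite E. reflexivity. Qed.

Lemma epoch_invariant l : reached l -> InLambda P (snd (epoch l)) /\ 0 <= fst (epoch l).
Proof.
 induction l as [|l IH]; intros Hr; [simpl; split; [auto|lra]|].
 destruct IH as [HL Ht]; [intros k Hk; apply Hr; lia|].
 specialize (Hr l (Nat.lt_succ_diag_r l)).
 destruct (first_hit (snd (epoch l))) as [tau|] eqn:Eh; [|contradiction].
 rewrite (epoch_S_some l tau Eh). simpl. destruct (first_hit_some _ _ Eh) as [H0 _]. split; [|lra].
 apply gmap_InLambda, InLambda_iff_margin. rewrite (first_hit_margin _ _ HL Eh). lra.
Qed.

Lemma epoch_time_mono l : fst (epoch l) <= fst (epoch (S l)).
Proof.
 destruct (first_hit (snd (epoch l))) as [tau|] eqn:Eh.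
 - rewrite (epoch_S_some l tau Eh). simpl. destruct (first_hit_some _ _ Eh). lra.
 - rewrite (epoch_S_none l Eh). lra.
Qed.

Lemma epochs_cases : (forall l, first_hit (snd (epoch l)) <> None) \/
  exists J, first_hit (snd (epoch J)) = None /\ reached J.
Proof.
 destruct (classic (forall l, first_hit (snd (epoch l)) <> None)) as [Hall|Hn]; [left; auto|right].
 apply not_all_ex_not in Hn. destruct Hn as [n Hn]. apply NNPP in Hn.
 destruct (dec_inh_nat_subset_has_unique_least_element (fun n => first_hit (snd (epoch n)) = None)
             (fun n => classic _) (ex_intro _ n Hn)) as [J [[HJ HJmin] _]].
 exists J. split; auto. intros k Hk Hnone. specialize (HJmin k Hnone). lia.
Qed.

Definition dom (s : R) (l : nat) : Prop :=
  reached l /\ match first_hit (snd (epoch l)) with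
               | Some tau => fst (epoch l) <= s <= fst (epoch l) + tau
               | None => fst (epoch l) <= s
               end.

Definition traj (s : R) (l : nat) : HState := flw (snd (epoch l)) (s - fst (epoch l)).

Lemma traj_at_epoch l : traj (fst (epoch l)) l = snd (epoch l).
Proof. unfold traj. replace (fst (epoch l) - fst (epoch l)) with 0 by ring. apply (flow_at_0 P flw Hflw). Qed.

Lemma dom_InC t l : dom t l -> InC P (traj t l).
Proof.
 intros [Hr Hm]. destruct (epoch_invariant l Hr) as [HL _]. unfold traj, InC. apply InLambda_iff_margin.
 destruct (first_hit (snd (epoch l))) as [tau|] eqn:Eh.
 - destruct (first_hit_some _ _ Eh) as [H0 [H1 H2]].
   destruct (Req_dec (t - fst (epoch l)) tau) as [E|E].
   + rewrite E, (first_hit_margin _ _ HL Eh). lra.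
   + left. apply H1. lra.
 - left. apply first_hit_none; auto. lra.
Qed.

Lemma dom_hybrid_time_domain : HybridTimeDomain dom.
Proof.
 exists (fun l => fst (epoch l)). split; [reflexivity|]. split; [apply epoch_time_mono|].
 destruct epochs_cases as [Hall|[J [HJ HJr]]].
 - left. intros s l. unfold dom.
   assert (Hr : reached l) by (intros k _; apply Hall).
   specialize (Hall l). destruct (first_hit (snd (epoch l))) as [tau|] eqn:Eh; [|contradiction].
   rewrite (epoch_S_some l tau Eh). simpl. tauto.
 - right. exists J. split; [|split].
   + intros s l Hl. unfold dom.
     assert (Hr : reached l) by (intros k Hk; apply HJr; lia).
     specialize (HJr l Hl). destruct (first_hit (snd (epoch l))) as [tau|] eqn:Eh; [|contradiction].
     rewrite (epoch_S_some l tau Eh). simpl. tauto.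
   + intros s l Hl [Hr _]. apply (Hr J Hl). auto.
   + right; right. intros s. unfold dom. rewrite HJ. tauto.
Qed.

Lemma dom_0_0 : dom 0 O.
Proof.
 split; [intros k Hk; lia|].
 simpl. destruct (first_hit z0) as [tau|] eqn:Eh; [|lra]. destruct (first_hit_some _ _ Eh). lra.
Qed.

Lemma dom_interior t l : dom t l -> t <> fst (epoch l) -> t <> fst (epoch (S l)) ->
  Interior (fun s => dom s l) t.
Proof.
 intros [Hr Hm] Ha Hb. set (a := fst (epoch l)) in *.
 destruct (first_hit (snd (epoch l))) as [tau|] eqn:Eh.
 - rewrite (epoch_S_some l tau Eh) in Hb. simpl in Hb. fold a in Hb.
   exists (Rmin (t - a) (a + tau - t)). split; [apply Rmin_pos; lra|].
   intros s Hs. split; auto. rewrite Eh. fold a.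
   pose proof (Rmin_l (t - a) (a + tau - t)). pose proof (Rmin_r (t - a) (a + tau - t)).
   apply Rabs_def2 in Hs. lra.
 - exists (t - a). split; [lra|].
   intros s Hs. split; auto. rewrite Eh. fold a. apply Rabs_def2 in Hs. lra.
Qed.

Lemma traj_flows l :
  LocAbsContState P (fun t => dom t l) (fun t => traj t l) /\
  (forall t, Interior (fun s => dom s l) t -> InC P (traj t l)) /\
  (exists Nz, NullSet Nz /\
     forall t, dom t l -> ~ Nz t -> Interior (fun s => dom s l) t /\ HasFlowDeriv P (fun s => traj s l) t).
Proof.
 destruct Hflw as [_ Hsg Hder Heta Hom Hxs].
 set (z := snd (epoch l)). set (a := fst (epoch l)).
 split; [|split].
 - unfold traj. fold z a. split; [|split; [|split]].
   + intros i j _. apply HalfLineLip_LocAbsCont, (HalfLineLip_shift (fun t => eta (flw z t) i j)), Heta.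
   + intros j _. apply HalfLineLip_LocAbsCont, (HalfLineLip_shift (fun t => om (flw z t) j)), Hom.
   + intros j k _ _. apply HalfLineLip_LocAbsCont, (HalfLineLip_shift (fun t => xs (flw z t) j k)), Hxs.
   + intros j _. apply HalfLineLip_LocAbsCont.
     apply (HalfLineLip_ext _ (fun _ => IZR (sg z j))); [|apply HalfLineLip_const].
     intros t. rewrite Hsg. reflexivity.
 - intros t [e [He H]]. apply dom_InC, H. unfold Rminus; rewrite Rplus_opp_r, Rabs_R0. auto.
 - exists (fun t => t = a \/ t = fst (epoch (S l))). split; [apply NullSet_pair|].
   intros t Hd Hnz. split; [apply dom_interior; auto|].
   unfold traj. fold z a. apply HasFlowDeriv_shift, Hder.
   destruct Hd as [_ Hm]. fold z a in Hm.
   destruct (first_hit z); destruct (Req_dec t a); try (exfalso; apply Hnz; auto; fail); lra.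
Qed.

Lemma traj_jumps t l : dom t l -> dom t (S l) -> InD P (traj t l) /\ traj t (S l) = gmap P (traj t l).
Proof.
 intros [Hr Hm] [Hr' Hm'].
 specialize (Hr' l (Nat.lt_succ_diag_r l)).
 destruct (first_hit (snd (epoch l))) as [tau|] eqn:Eh; [|contradiction].
 destruct (epoch_invariant l Hr) as [HL _].
 assert (Et : t = fst (epoch (S l))).
 { destruct (first_hit (snd (epoch (S l)))); rewrite (epoch_S_some l tau Eh) in *; simpl in *; lra. }
 rewrite Et, traj_at_epoch, (epoch_S_some l tau Eh). unfold traj. simpl.
 replace (fst (epoch l) + tau - fst (epoch l)) with tau by ring.
 split; [|reflexivity]. apply margin_eq0_InD, (first_hit_margin _ _ HL Eh).
Qed.

(* Zeno solutions are complete too: the number of jumps is unbounded. *)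
Lemma dom_complete : Complete dom.
Proof.
 intros Mb. destruct epochs_cases as [Hall|[J [HJ HJr]]].
 - destruct (INR_unbounded Mb) as [n Hn].
   assert (Hr : reached n) by (intros k _; apply Hall).
   destruct (epoch_invariant n Hr) as [_ Ht].
   exists (fst (epoch n)), n. split; [|lra]. split; auto.
   specialize (Hall n). destruct (first_hit (snd (epoch n))) as [tau|] eqn:Eh; [|contradiction].
   destruct (first_hit_some _ _ Eh). lra.
 - exists (Rmax (fst (epoch J)) Mb), J. split.
   + split; auto. rewrite HJ. apply Rmax_l.
   + pose proof (Rmax_r (fst (epoch J)) Mb). pose proof (pos_INR J). lra.
Qed.

Lemma hybrid_solution_exists : exists (K : R -> nat -> Prop) (z : R -> nat -> HState),
    IsSolution P K z /\ Complete K /\ z 0 O = z0.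
Proof.
 exists dom, traj.
 assert (Hstart : traj 0 O = z0) by exact (traj_at_epoch O).
 split; [|split; [apply dom_complete|exact Hstart]].
 split; [apply dom_hybrid_time_domain|]. split; [apply dom_0_0|]. split.
 - left. rewrite Hstart. auto.
 - split; [apply traj_flows|apply traj_jumps].
Qed.

End HybridSolution.

Theorem lemma4 (P : Net) (HP : NetAssumptions P) (z0 : HState) (Hz0 : InLambda P z0) :
  exists (K : R -> nat -> Prop) (z : R -> nat -> HState),
    IsSolution P K z /\ Complete K /\ z 0 O = z0.
Proof.
 destruct (network_flow_exists P HP) as [flw Hflw].
 exact (hybrid_solution_exists P flw HP Hflw z0 Hz0).
Qed.
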